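(* Let $A$ be a T-brace and let $n$ be a natural number. Then for every $a\in\zeta_n(\star,A)$, the subbrace $\mathbf{br}(a)$ generated by $a$ is an ideal of $A$.
   Context: A (left) brace is a set $A$ with two operations $+$ and $\cdot$ such that $(A,+)$ is an abelian group, $(A,\cdot)$ is a group, and $a(b+c)=ab+ac-a$ for all $a,b,c\in A$. Put $a\star b=ab-a-b$. A subbrace is a subset which is a subgroup of both $(A,+)$ and $(A,\cdot)$; $\mathbf{br}(a)$ is the intersection of all subbraces containing $a$. A subbrace $L$ is an ideal if $a\star z, z\star a\in L$ for all $a\in A$, $z\in L$, and then the quotient brace $A/L$ is defined. $A$ is a T-brace if whenever $I$ is an ideal of $J$ and $J$ is an ideal of $A$, then $I$ is an ideal of $A$. The $\star$-center is $\zeta(\star,A)=\{a: a\star x=x\star a=0\ \forall x\}$; the upper $\star$-central series is $\zeta_0(\star,A)=0$, $\zeta_{n+1}(\star,A)/\zeta_n(\star,A)=\zeta(\star,A/\zeta_n(\star,A))$, each term an ideal of $A$. *)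

From mathcomp Require Import all_boot all_algebra.
Set Implicit Arguments. Unset Strict Implicit. Unset Printing Implicit Defensive.
Import GRing.Theory.
Local Open Scope ring_scope.

(* A (left) brace structure on an abelian group (T,+) : zmodType. *)
Record brace (T : zmodType) := Brace {
  bmul : T -> T -> T;
  binv : T -> T;
  bone : T;
  bmulA : forall a b c, bmul a (bmul b c) = bmul (bmul a b) c;
  bmul1 : forall a, bmul bone a = a;
  bmulV : forall a, bmul (binv a) a = bone;
  bmulD : forall a b c, bmul a (b + c) = bmul a b + bmul a c - a
}.

Section BraceDefs.
Variables (T : zmodType) (B : brace T).

Definition star (a b : T) : T := bmul B a b - a - b.

Definition subbrace (S : T -> Prop) : Prop :=
  (S 0 /\ (forall x y, S x -> S y -> S (x + y)) /\ (forall x, S x -> S (- x))) /\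
  (S (bone B) /\ (forall x y, S x -> S y -> S (bmul B x y))
    /\ (forall x, S x -> S (binv B x))).

Definition br (a : T) : T -> Prop :=
  fun x => forall S, subbrace S -> S a -> S x.

Definition ideal_of (J I : T -> Prop) : Prop :=
  [/\ subbrace I, (forall x, I x -> J x)
    & forall a z, J a -> I z -> I (star a z) /\ I (star z a)].

Definition ideal (I : T -> Prop) : Prop := ideal_of (fun _ => True) I.

Definition Tbrace : Prop :=
  forall I J : T -> Prop, ideal J -> ideal_of J I -> ideal I.

(* upper star-central series; zeta_{n+1} is the preimage in A of the
   star-center of A/zeta_n, i.e. a such that a*x, x*a lie in zeta_n. *)
Fixpoint zeta (n : nat) : T -> Prop :=
  match n with
  | O => fun a => a = 0
  | S m => fun a => forall x, zeta m (star a x) /\ zeta m (star x a)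
  end.

End BraceDefs.

(* Congruence modulo an ideal N of A is compatible with +, -, ∘, inverse and ⋆,
   and the elements that are ⋆-central modulo N form an ideal containing N; hence
   every ζ_k is an ideal and ζ_(k+1) is ⋆-central modulo ζ_k.  Consequently, for a
   subbrace P, the subbrace P + ζ_k is an ideal of P + ζ_(k+1).  For P = br(a) with
   a ∈ ζ_n the top of this chain is P + ζ_n = ζ_n, an ideal of A, and the T-property
   carries idealness down the chain to P + ζ_0 = br(a). *)

From mathcomp Require Import all_boot all_algebra.
Set Implicit Arguments. Unset Strict Implicit. Unset Printing Implicit Defensive.
Import GRing.Theory.
Local Open Scope ring_scope.

Section Braces.
Variables (T : zmodType) (B : brace T).
Implicit Types a x y : T.
Local Notation "x ∘ y" := (bmul B x y) (at level 40, left associativity).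
Local Notation "x ⋆ y" := (star B x y) (at level 40, left associativity).

Lemma bmulr0 x : x ∘ 0 = x.
Proof.
have := bmulD B x 0 0; rewrite addr0 -addrA -[LHS]addr0 => /addrI /eqP.
by rewrite eq_sym subr_eq0 => /eqP.
Qed.

Lemma bone_eq0 : bone B = 0.
Proof. by rewrite -(bmul1 B 0) bmulr0. Qed.

Lemma bmul0r x : 0 ∘ x = x.
Proof. by rewrite -bone_eq0 bmul1. Qed.

Lemma bmulrV x : x ∘ binv B x = 0.
Proof.
have /(congr1 (bmul B (binv B (binv B x)))) : binv B x ∘ (x ∘ binv B x) = binv B x.
  by rewrite bmulA bmulV bone_eq0 bmul0r.
by rewrite !bmulA bmulV bone_eq0 !bmul0r.
Qed.

Lemma binv0 : binv B 0 = 0.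
Proof. by rewrite -[LHS]bmul0r bmulrV. Qed.

Lemma bmulBr a x y : a ∘ (x - y) = a ∘ x - a ∘ y + a.
Proof.
by have := bmulD B a (x - y) y; rewrite subrK => ->; rewrite addrAC subrK addrK.
Qed.

Lemma bmul_star a x : a ∘ x = a + x + a ⋆ x.
Proof. by rewrite /star -(addrA (_ ∘ _)) -opprD [RHS]addrC subrK. Qed.

Lemma starDr a x y : a ⋆ (x + y) = a ⋆ x + a ⋆ y.
Proof.
rewrite /star bmulD opprD !addrA -!(addrAC _ (a ∘ y)).
by rewrite (addrAC _ (-x) (-a)).
Qed.

Lemma star0r a : a ⋆ 0 = 0.
Proof. by rewrite /star bmulr0 subrr subr0. Qed.

Lemma star0l a : 0 ⋆ a = 0.
Proof. by rewrite /star bmul0r subr0 subrr. Qed.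

Lemma starNr a x : a ⋆ (- x) = - (a ⋆ x).
Proof. by apply/eqP; rewrite -addr_eq0 -starDr addNr star0r. Qed.

Section SubbraceClosure.
Variables (S : T -> Prop) (S_subbrace : subbrace B S).

Lemma subbrace0 : S 0.
Proof. by case: S_subbrace => [[]]. Qed.

Lemma subbrace1 : S (bone B).
Proof. by case: S_subbrace => _ []. Qed.

Lemma subbraceD x y : S x -> S y -> S (x + y).
Proof. by case: S_subbrace => [[_ [SD _]] _]; apply: SD. Qed.

Lemma subbraceN x : S x -> S (- x).
Proof. by case: S_subbrace => [[_ [_ SN]] _]; apply: SN. Qed.

Lemma subbraceB x y : S x -> S y -> S (x - y).
Proof. by move=> Sx Sy; apply: subbraceD Sx (subbraceN Sy). Qed.

Lemma subbrace_bmul x y : S x -> S y -> S (x ∘ y).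
Proof. by case: S_subbrace => _ [_ [SM _]]; apply: SM. Qed.

Lemma subbrace_binv x : S x -> S (binv B x).
Proof. by case: S_subbrace => _ [_ [_ SV]]; apply: SV. Qed.

Lemma subbrace_star x y : S x -> S y -> S (x ⋆ y).
Proof. by move=> Sx Sy; do 2![apply: subbraceB => //]; apply: subbrace_bmul. Qed.

End SubbraceClosure.

Lemma ideal_subbrace I : ideal B I -> subbrace B I.
Proof. by case. Qed.

Lemma ideal_starl I a z : ideal B I -> I z -> I (a ⋆ z).
Proof. by case=> _ _ I_st /(I_st a) []. Qed.

Lemma ideal_starr I a z : ideal B I -> I z -> I (z ⋆ a).
Proof. by case=> _ _ I_st /(I_st a) []. Qed.

Lemma subbrace_ext S S' : (forall x, S x <-> S' x) -> subbrace B S -> subbrace B S'.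
Proof.
move=> SS' S_sb; split; split.
- by apply/SS'; apply: subbrace0.
- split=> [x y /SS' Sx /SS' Sy | x /SS' Sx]; apply/SS'; first exact: subbraceD.
  exact: subbraceN.
- by apply/SS'; apply: subbrace1.
- split=> [x y /SS' Sx /SS' Sy | x /SS' Sx]; apply/SS'; first exact: subbrace_bmul.
  exact: subbrace_binv.
Qed.

Lemma ideal_ext I I' : (forall x, I x <-> I' x) -> ideal B I -> ideal B I'.
Proof.
move=> II' I_ideal; split=> [|//|a z _ /II' Iz].
  exact: subbrace_ext II' (ideal_subbrace I_ideal).
by split; apply/II'; [exact: ideal_starl | exact: ideal_starr].
Qed.

Section ModuloIdeal.
Variables (N : T -> Prop) (N_ideal : ideal B N).
Let N_sb := ideal_subbrace N_ideal.

Definition eqmod x y := N (x - y).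

Lemma eqmod_refl x : eqmod x x.
Proof. by rewrite /eqmod subrr; apply: subbrace0. Qed.

Lemma eqmod_sym x y : eqmod x y -> eqmod y x.
Proof. by rewrite /eqmod => /(subbraceN N_sb); rewrite opprB. Qed.

Lemma eqmod_trans y x z : eqmod x y -> eqmod y z -> eqmod x z.
Proof.
by rewrite /eqmod => Nxy Nyz; have := subbraceD N_sb Nxy Nyz; rewrite addrA subrK.
Qed.

Lemma eqmodD x x' y y' : eqmod x x' -> eqmod y y' -> eqmod (x + y) (x' + y').
Proof. by rewrite /eqmod opprD addrACA; apply: subbraceD. Qed.

Lemma eqmodN x x' : eqmod x x' -> eqmod (- x) (- x').
Proof. by rewrite /eqmod -opprD; apply: subbraceN. Qed.

Lemma eqmodB x x' y y' : eqmod x x' -> eqmod y y' -> eqmod (x - y) (x' - y').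
Proof. by move=> xx' /eqmodN; apply: eqmodD. Qed.

Lemma eqmod0 x : eqmod x 0 <-> N x.
Proof. by rewrite /eqmod subr0. Qed.

Lemma eqmod_ideal x y : eqmod x y -> N y -> N x.
Proof. by rewrite /eqmod => Nxy Ny; have := subbraceD N_sb Nxy Ny; rewrite subrK. Qed.

Lemma eqmod_bmulr x y y' : eqmod y y' -> eqmod (x ∘ y) (x ∘ y').
Proof.
rewrite /eqmod => Nyy'; have -> : x ∘ y - x ∘ y' = (y - y') + x ⋆ (y - y').
  by apply: (addIr x); rewrite -bmulBr bmul_star [RHS]addrC [RHS]addrA.
by apply: subbraceD => //; apply: ideal_starl N_ideal Nyy'.
Qed.

Lemma eqmod_bmull y x x' : eqmod x x' -> eqmod (x ∘ y) (x' ∘ y).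
Proof.
move=> xx'; set u := binv B x ∘ x'.
have Nu : N u.
  by have := eqmod_bmulr (binv B x) (eqmod_sym xx'); rewrite bmulV bone_eq0 => /eqmod0.
have -> : x' = x ∘ u by rewrite /u bmulA bmulrV bmul0r.
rewrite -bmulA; apply: eqmod_bmulr.
rewrite /eqmod bmul_star addrAC opprD addrCA subrr addr0.
by apply/(subbraceN N_sb)/(subbraceD N_sb Nu); apply: ideal_starr N_ideal Nu.
Qed.

Lemma eqmod_bmul x x' y y' : eqmod x x' -> eqmod y y' -> eqmod (x ∘ y) (x' ∘ y').
Proof. by move=> xx' yy'; apply: eqmod_trans (eqmod_bmull _ xx') (eqmod_bmulr _ yy'). Qed.

Lemma eqmod_binv x x' : eqmod x x' -> eqmod (binv B x) (binv B x').
Proof.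
move=> xx'; have := eqmod_bmull (binv B x') (eqmod_bmulr (binv B x) (eqmod_sym xx')).
by rewrite -bmulA bmulrV bmulr0 bmulV bone_eq0 bmul0r.
Qed.

Lemma eqmod_star x x' y y' : eqmod x x' -> eqmod y y' -> eqmod (x ⋆ y) (x' ⋆ y').
Proof. by move=> xx' yy'; do 2!apply: eqmodB => //; apply: eqmod_bmul. Qed.

(* For N = ζ_k this is ζ_(k+1), the preimage of the ⋆-centre of A/N. *)
Definition central_mod c := forall x, N (c ⋆ x) /\ N (x ⋆ c).

Lemma ideal_sub_central_mod c : N c -> central_mod c.
Proof. by move=> Nc x; split; [apply: ideal_starr | apply: ideal_starl]. Qed.

Lemma central_mod_eqmod c c' : eqmod c c' -> central_mod c' -> central_mod c.
Proof.
move=> cc' c'_central x; have [Nc'x Nxc'] := c'_central x.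
split; [apply: eqmod_ideal Nc'x | apply: eqmod_ideal Nxc'].
  exact: eqmod_star cc' (eqmod_refl x).
exact: eqmod_star (eqmod_refl x) cc'.
Qed.

Lemma central_mod_bmull c x : central_mod c -> eqmod (c ∘ x) (c + x).
Proof.
by move=> c_central; rewrite /eqmod bmul_star addrC addKr; case: (c_central x).
Qed.

Lemma central_mod_bmulr c x : central_mod c -> eqmod (x ∘ c) (x + c).
Proof.
by move=> c_central; rewrite /eqmod bmul_star addrC addKr; case: (c_central x).
Qed.

Lemma central_mod_binv_opp c : central_mod c -> eqmod (binv B c) (- c).
Proof.
move=> c_central; have := central_mod_bmull (binv B c) c_central.
by rewrite bmulrV => /eqmod_sym /eqmod0; rewrite /eqmod opprK addrC.
Qed.

Lemma star_addl_central_mod x c y : central_mod c -> eqmod ((x + c) ⋆ y) (x ⋆ y).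
Proof.
move=> c_central; apply: (@eqmod_trans ((x ∘ c) ⋆ y)).
  by apply: eqmod_star; [apply/eqmod_sym/central_mod_bmulr | apply: eqmod_refl].
rewrite /eqmod; have -> : (x ∘ c) ⋆ y - x ⋆ y = x ∘ (c ∘ y) - x ∘ (c + y).
  rewrite /star -bmulA bmulD !opprD !opprK !addrA.
  by rewrite (addrAC _ (- y) (- (x ∘ y))) (addrAC _ (- y) x) subrK.
exact/eqmod_bmulr/central_mod_bmull.
Qed.

Lemma central_modD c d : central_mod c -> central_mod d -> central_mod (c + d).
Proof.
move=> c_central d_central x.
have [Ncx Nxc] := c_central x; have [_ Nxd] := d_central x.
split; first exact: eqmod_ideal (star_addl_central_mod c x d_central) Ncx.
by rewrite starDr; apply: subbraceD.
Qed.

Lemma central_modN c : central_mod c -> central_mod (- c).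
Proof.
move=> c_central x; split.
  by have := star_addl_central_mod (- c) x c_central;
    rewrite addNr star0l => /eqmod_sym /eqmod0.
by rewrite starNr; apply/(subbraceN N_sb); case: (c_central x).
Qed.

Lemma central_modM c d : central_mod c -> central_mod d -> central_mod (c ∘ d).
Proof.
move=> c_central d_central; apply: central_mod_eqmod (central_modD c_central d_central).
exact: central_mod_bmull.
Qed.

Lemma central_modV c : central_mod c -> central_mod (binv B c).
Proof.
move=> c_central.
exact: central_mod_eqmod (central_mod_binv_opp c_central) (central_modN c_central).
Qed.

Lemma ideal_central_mod : ideal B central_mod.
Proof.
split=> [|//|a z _ z_central]; last first.
  by have [Nza Naz] := z_central a; split; apply: ideal_sub_central_mod.
have central0 : central_mod 0 by move=> x; rewrite star0l star0r; split; apply: subbrace0.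
split; split=> //; first by split; [apply: central_modD | apply: central_modN].
- by rewrite bone_eq0.
- by split; [apply: central_modM | apply: central_modV].
Qed.

End ModuloIdeal.

Definition plus_set (P N : T -> Prop) z := exists2 y, P y & N (z - y).

Lemma plus_set0 P z : plus_set P (zeta B 0) z <-> P z.
Proof.
split=> [[y Py /= /eqP] | Pz]; first by rewrite subr_eq0 => /eqP ->.
by exists z; rewrite /= ?subrr.
Qed.

Section PlusIdeal.
Variables (N P : T -> Prop) (N_ideal : ideal B N) (P_sb : subbrace B P).
Let N_sb := ideal_subbrace N_ideal.

Lemma plus_set_idr : (forall x, P x -> N x) -> forall z, N z <-> plus_set P N z.
Proof.
move=> PN z; split=> [Nz | [y Py Nzy]].
  by exists 0; [apply: subbrace0 | rewrite subr0].
by have := subbraceD N_sb Nzy (PN y Py); rewrite subrK.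
Qed.

Lemma subbrace_plus_set : subbrace B (plus_set P N).
Proof.
split; split.
- by exists 0; [apply: subbrace0 | apply: eqmod_refl].
- split=> [x y [x' Px' xx'] [y' Py' yy'] | x [x' Px' xx']].
    by exists (x' + y'); [apply: subbraceD | apply: eqmodD].
  by exists (- x'); [apply: subbraceN | apply: eqmodN].
- by exists (bone B); [apply: subbrace1 | apply: eqmod_refl].
- split=> [x y [x' Px' xx'] [y' Py' yy'] | x [x' Px' xx']].
    by exists (x' ∘ y'); [apply: subbrace_bmul | apply: eqmod_bmul].
  by exists (binv B x'); [apply: subbrace_binv | apply: eqmod_binv].
Qed.

Lemma plus_set_ideal_of : ideal_of B (plus_set P (central_mod N)) (plus_set P N).
Proof.
split; first exact: subbrace_plus_set.
  by move=> z [y Py Nzy]; exists y => //; apply: ideal_sub_central_mod N_ideal _ Nzy.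
move=> a z [y' Py' ay'] [y Py zy]; have -> : a = y' + (a - y') by rewrite addrC subrK.
split.
- exists (y' ⋆ y); first exact: subbrace_star.
  apply: (eqmod_trans N_ideal (eqmod_star N_ideal (eqmod_refl N_ideal _) zy)).
  exact: star_addl_central_mod.
- exists (y ⋆ y'); first exact: subbrace_star.
  apply: (eqmod_trans N_ideal (eqmod_star N_ideal zy (eqmod_refl N_ideal _))).
  by rewrite /eqmod starDr addrC addKr; case: (ay' y).
Qed.

End PlusIdeal.

Lemma zeta_ideal k : ideal B (zeta B k).
Proof.
elim: k => [|k IHk]; last exact: ideal_central_mod IHk.
split=> [|//|a z _ /= ->]; last by rewrite star0l star0r.
split; split=> //=.
- by split=> [x y -> -> | x ->]; rewrite ?addr0 ?oppr0.
- exact: bone_eq0.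
- by split=> [x y -> -> | x ->]; rewrite ?bmul0r ?binv0.
Qed.

Lemma br_subbrace a : subbrace B (br B a).
Proof.
split; split.
- by move=> Q Q_sb _; apply: subbrace0.
- split=> [x y brx bry | x brx] Q Q_sb Qa.
    exact: (subbraceD Q_sb (brx Q Q_sb Qa) (bry Q Q_sb Qa)).
  exact: (subbraceN Q_sb (brx Q Q_sb Qa)).
- by move=> Q Q_sb _; apply: subbrace1.
- split=> [x y brx bry | x brx] Q Q_sb Qa.
    exact: (subbrace_bmul Q_sb (brx Q Q_sb Qa) (bry Q Q_sb Qa)).
  exact: (subbrace_binv Q_sb (brx Q Q_sb Qa)).
Qed.

Lemma Tbrace_ideal_chain (I : nat -> T -> Prop) n : Tbrace B ->
  ideal B (I n) -> (forall k, ideal_of B (I k.+1) (I k)) -> ideal B (I 0).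
Proof.
move=> TB; elim: n => [//|n IHn] In1 chain.
exact/IHn/chain/(TB _ _ In1 (chain n)).
Qed.

End Braces.

Theorem lemma3p1 (T : zmodType) (B : brace T) (n : nat) (a : T) :
  Tbrace B -> zeta B n a -> ideal B (br B a).
Proof.
move=> TB a_zeta; pose J k := plus_set (br B a) (zeta B k).
have br_zeta x : br B a x -> zeta B n x.
  by move/(_ _ (ideal_subbrace (zeta_ideal B n)) a_zeta).
apply: (ideal_ext (plus_set0 B (br B a))).
apply: (Tbrace_ideal_chain (I := J) (n := n) TB).
  have J_zeta := plus_set_idr (zeta_ideal B n) (br_subbrace B a) br_zeta.
  exact: (ideal_ext J_zeta (zeta_ideal B n)).
by move=> k; apply: (plus_set_ideal_of (zeta_ideal B k) (br_subbrace B a)).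
Qed.
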